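(* Let $p\in[1,\infty]$, $W^{(1)}\in\mathbb{R}^{n_1\times n_0}$, $W^{(2)}\in\mathbb{R}^{n_2\times n_1}$, and let $\alpha,\beta\in\mathbb{R}^{n_1}$ satisfy $0\le\alpha_i\le\beta_i<\infty$ for all $i$. For $d\in\mathbb{R}^{n_1}_+$ define $$L(d)=\|W^{(2)}\|_p\,\big\|\mathrm{diag}\big(\max(|\beta-d|,|d-\alpha|)\big)W^{(1)}\big\|_p+\|W^{(2)}\mathrm{diag}(d)W^{(1)}\|_p,$$ with $\max$ and $|\cdot|$ taken elementwise. Then $L(\beta/2)\le L(0)$.
   Context: $\|A\|_p=\sup_{\|x\|_p\le1}\|Ax\|_p$ denotes the induced operator norm of a matrix $A$. (In the paper, $L(d)$ is a Lipschitz constant of the two-layer network $x\mapsto W^{(2)}\sigma(W^{(1)}x)$ whose activations $\sigma_i$ are slope-restricted in $[\alpha_i,\beta_i]$, and $L(0)=\|W^{(2)}\|_p\|\mathrm{diag}(\beta)W^{(1)}\|_p$ is the naive bound.) *)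

From HB Require Import structures.
From mathcomp Require Import all_boot all_order all_algebra.
From mathcomp Require Import all_classical all_reals all_analysis.
Set Implicit Arguments. Unset Strict Implicit. Unset Printing Implicit Defensive.
Import Order.TTheory GRing.Theory Num.Theory.
Local Open Scope ring_scope.
Local Open Scope classical_set_scope.

Definition vnorm (R : realType) (n : nat) (p : \bar R) (x : 'cV[R]_n) : R :=
  match p with
  | EFin q => (\sum_(i < n) `|x i 0| `^ q) `^ q^-1
  | +oo%E => \big[Num.max/0]_(i < n) `|x i 0|
  | -oo%E => 0
  end.

Definition opnorm (R : realType) (m n : nat) (p : \bar R) (A : 'M[R]_(m, n)) : R :=
  sup [set vnorm p (A *m x) | x in [set x : 'cV[R]_n | vnorm p x <= 1]].

Definition Lbound (R : realType) (n0 n1 n2 : nat) (p : \bar R)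
  (W1 : 'M[R]_(n1, n0)) (W2 : 'M[R]_(n2, n1)) (alpha beta d : 'rV[R]_n1) : R :=
  opnorm p W2 *
    opnorm p (diag_mx (\row_i Num.max `|beta 0 i - d 0 i| `|d 0 i - alpha 0 i|) *m W1)
  + opnorm p (W2 *m diag_mx d *m W1).

From HB Require Import structures.
From mathcomp Require Import all_boot all_order all_algebra.
From mathcomp Require Import all_classical all_reals all_analysis.
From mathcomp Require Import ring lra.
Import Order.TTheory GRing.Theory Num.Theory.
Local Open Scope ring_scope.

(* At d = beta/2 the weight max(|beta - d|, |d - alpha|) is beta/2, since
   0 <= alpha <= beta.  With B := diag(beta) W1, homogeneity and
   submultiplicativity of the operator norm then give
   L(beta/2) = ||W2|| ||B/2|| + ||W2 (B/2)|| <= ||W2|| ||B||, whereas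
   L(0) = ||W2|| ||B|| + ||0||. *)

Lemma maxr_dist_half (R : realFieldType) (a b : R) : 0 <= a -> a <= b ->
  Num.max `|b - 2^-1 * b| `|2^-1 * b - a| = 2^-1 * b.
Proof.
move=> a0 ab; have -> : b - 2^-1 * b = 2^-1 * b by field.
rewrite ger0_norm; last by rewrite mulr_ge0 // (le_trans a0).
by apply/max_idPl; rewrite ler_norml; apply/andP; split; lra.
Qed.

Section OperatorNorm.
Context {R : realType} {p : \bar R}.
Hypothesis p_gt0 : (0 < p)%E.

Let p_cases : (exists2 q : R, p = q%:E & 0 < q) \/ p = +oo%E.
Proof.
by case: p p_gt0 => [q| |] hq; [left; exists q | right | rewrite ltNge leNye in hq].
Qed.

Section VectorNorm.
Context {n : nat}.
Implicit Types x y : 'cV[R]_n.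

Lemma vnorm_ge0 x : 0 <= vnorm p x.
Proof.
case: p_cases => [[q -> _]|->] /=; first exact: powR_ge0.
by elim/big_ind: _ => // a b a0 _; rewrite le_max a0.
Qed.

Lemma ler_coord_vnorm x i : `|x i 0| <= vnorm p x.
Proof.
case: p_cases => [[q -> q0]|->] /=; last exact: le_bigmax.
rewrite -{1}(@powRr1 _ `|x i 0|) // -(mulfV (lt0r_neq0 q0)) powRrM.
apply: ge0_ler_powR; rewrite ?nnegrE ?invr_ge0 ?powR_ge0 ?sumr_ge0 //; first exact: ltW.
by rewrite (bigD1 i) //= lerDl sumr_ge0 // => j _; exact: powR_ge0.
Qed.

Lemma ler_vnorm x y : (forall i, `|x i 0| <= `|y i 0|) -> vnorm p x <= vnorm p y.
Proof.
move=> xy; case: p_cases => [[q -> q0]|->] /=; last exact: le_bigmax2.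
apply: ge0_ler_powR; rewrite ?nnegrE ?invr_ge0 ?sumr_ge0 //; first exact: ltW.
by apply: ler_sum => i _; apply: ge0_ler_powR; rewrite ?nnegrE // ltW.
Qed.

Lemma vnormZ c x : 0 <= c -> vnorm p (c *: x) = c * vnorm p x.
Proof.
move=> c0; case: p_cases => [[q -> q0]|->] /=.
  under eq_bigr => i _ do rewrite mxE normrM (ger0_norm c0) powRM //.
  rewrite -mulr_sumr powRM ?powR_ge0 ?sumr_ge0 //.
  by rewrite -powRrM mulfV ?lt0r_neq0 // powRr1.
under eq_bigr => i _ do rewrite mxE normrM (ger0_norm c0).
by rewrite (big_morph (fun t => c * t) (id1 := 0) (op1 := Num.max)) ?mulr0 //
  => a b; rewrite maxr_pMr.
Qed.

Lemma vnorm0 : vnorm p (0 : 'cV[R]_n) = 0.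
Proof. by rewrite -(scale0r (0 : 'cV[R]_n)) vnormZ // mul0r. Qed.

Lemma vnorm_eq0 x : vnorm p x = 0 -> x = 0.
Proof.
move=> x0; apply/matrixP => i j; rewrite (ord1 j) mxE; apply/eqP.
by rewrite -normr_le0 -x0 ler_coord_vnorm.
Qed.

End VectorNorm.

Section MatrixNorm.
Context {m n : nat}.
Implicit Types A : 'M[R]_(m, n).

(* Each entry of [A x] is bounded by the corresponding absolute row sum of [A]. *)
Lemma has_sup_opnorm A :
  has_sup [set vnorm p (A *m x) | x in [set x : 'cV[R]_n | vnorm p x <= 1]]%classic.
Proof.
split; first by exists (vnorm p (A *m 0)), 0; rewrite //= vnorm0.
exists (vnorm p (\col_i \sum_j `|A i j|)) => _ [x x1 <-].
apply: ler_vnorm => i; rewrite !mxE [X in _ <= X]ger0_norm ?sumr_ge0 //.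
apply: le_trans (ler_norm_sum _ _ _) _; apply: ler_sum => j _.
by rewrite normrM ler_piMr // (le_trans (ler_coord_vnorm x j)).
Qed.

Lemma opnorm_ub A x : vnorm p x <= 1 -> vnorm p (A *m x) <= opnorm p A.
Proof. by move=> x1; apply: (sup_upper_bound (has_sup_opnorm A)); exists x. Qed.

Lemma opnorm_lub A M :
  (forall x, vnorm p x <= 1 -> vnorm p (A *m x) <= M) -> opnorm p A <= M.
Proof.
move=> AM; apply: ge_sup; first exact: (has_sup_opnorm A).1.
by move=> _ [x x1 <-]; exact: AM.
Qed.

Lemma opnorm_ge0 A : 0 <= opnorm p A.
Proof.
apply: le_trans (vnorm_ge0 (A *m 0)) (opnorm_ub _ _ _).
by rewrite vnorm0.
Qed.

Lemma opnorm0 : opnorm p (0 : 'M[R]_(m, n)) = 0.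
Proof.
apply/eqP; rewrite eq_le opnorm_ge0 andbT.
by apply: opnorm_lub => x _; rewrite mul0mx vnorm0.
Qed.

Lemma vnorm_mulmx_le A x : vnorm p (A *m x) <= opnorm p A * vnorm p x.
Proof.
have [x0|x_neq0] := eqVneq (vnorm p x) 0.
  by rewrite (vnorm_eq0 _ x0) mulmx0 !vnorm0 mulr0.
have x_gt0 : 0 < vnorm p x by rewrite lt0r x_neq0 vnorm_ge0.
have y1 : vnorm p ((vnorm p x)^-1 *: x) <= 1.
  by rewrite vnormZ ?invr_ge0 ?(ltW x_gt0) // mulVf.
have -> : A *m x = vnorm p x *: (A *m ((vnorm p x)^-1 *: x)).
  by rewrite -scalemxAr scalerA mulfV // scale1r.
by rewrite vnormZ ?(ltW x_gt0) // mulrC ler_pM2r // opnorm_ub.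
Qed.

Lemma opnormZ c A : 0 <= c -> opnorm p (c *: A) = c * opnorm p A.
Proof.
move=> c0; have opnormZ_le (d : R) (B : 'M[R]_(m, n)) :
    0 <= d -> opnorm p (d *: B) <= d * opnorm p B.
  move=> d0; apply: opnorm_lub => x x1.
  by rewrite -scalemxAl vnormZ // ler_wpM2l // opnorm_ub.
apply/eqP; rewrite eq_le opnormZ_le //=.
have [->|c_neq0] := eqVneq c 0; first by rewrite mul0r opnorm_ge0.
have c_gt0 : 0 < c by rewrite lt0r c_neq0.
rewrite -ler_pdivlMl // -{1}[A](scalerK c_neq0).
by apply: opnormZ_le; rewrite invr_ge0.
Qed.

End MatrixNorm.

Lemma opnorm_mulmx {m n k} (A : 'M[R]_(m, n)) (B : 'M[R]_(n, k)) :
  opnorm p (A *m B) <= opnorm p A * opnorm p B.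
Proof.
apply: opnorm_lub => x x1; rewrite -mulmxA.
apply: le_trans (vnorm_mulmx_le A (B *m x)) _.
by rewrite ler_wpM2l ?opnorm_ge0 ?opnorm_ub.
Qed.

End OperatorNorm.

Theorem theorem1 (R : realType) (n0 n1 n2 : nat) (p : \bar R)
  (hp : (1 <= p)%E)
  (W1 : 'M[R]_(n1, n0)) (W2 : 'M[R]_(n2, n1)) (alpha beta : 'rV[R]_n1)
  (halpha : forall i, 0 <= alpha 0 i)
  (halphabeta : forall i, alpha 0 i <= beta 0 i) :
  Lbound p W1 W2 alpha beta ((2 : R)^-1 *: beta) <= Lbound p W1 W2 alpha beta 0.
Proof.
have p_gt0 : (0 < p)%E by apply: lt_le_trans hp; rewrite lte01.
have beta_ge0 i : 0 <= beta 0 i by exact: le_trans (halphabeta i).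
have weight_half : \row_i Num.max `|beta 0 i - (2^-1 *: beta) 0 i|
    `|(2^-1 *: beta) 0 i - alpha 0 i| = 2^-1 *: beta.
  by apply/rowP => i; rewrite !mxE maxr_dist_half.
have weight0 : \row_i Num.max `|beta 0 i - (0 : 'rV[R]_n1) 0 i|
    `|(0 : 'rV[R]_n1) 0 i - alpha 0 i| = beta.
  by apply/rowP => i; rewrite !mxE subr0 sub0r normrN !ger0_norm //; apply/max_idPl.
set B := diag_mx beta *m W1.
have diag_half : diag_mx (2^-1 *: beta) *m W1 = 2^-1 *: B.
  by apply/matrixP => i j; rewrite /B !mul_diag_mx !mxE mulrA.
rewrite /Lbound weight_half weight0 -mulmxA diag_half opnormZ ?invr_ge0 //.
apply: (@le_trans _ _ (opnorm p W2 * opnorm p B)); last by rewrite lerDl opnorm_ge0.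
apply: le_trans (lerD (lexx _) (opnorm_mulmx p_gt0 W2 _)) _.
by rewrite opnormZ ?invr_ge0 // -mulrDr -mulrDl -div1r -splitr mul1r.
Qed.
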